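(* For every integer $k\ge 5$, the adjacency matrix of the graph $W(k)$ has exactly $k-1$ nonpositive eigenvalues (counted with multiplicity).
   Context: All graphs are finite, simple and undirected. For an integer $k\ge 2$, the graph $W(k)$ on $k+\binom{k}{2}=\binom{k+1}{2}$ vertices is defined as follows. Its vertex set is $\{a_1,\dots,a_k\}\cup\{b_S : S\subseteq\{1,\dots,k\},\ |S|=2\}$. The vertices $a_1,\dots,a_k$ are pairwise adjacent (forming a complete graph $K_k$). Two vertices $b_S,b_T$ are adjacent iff $S\cap T=\emptyset$ (so these vertices form the Kneser graph $Kneser(k,2)$). A vertex $a_i$ is adjacent to $b_S$ iff $i\in S$. *)

From HB Require Import structures.
From mathcomp Require Import all_boot all_order all_algebra all_field.
Set Implicit Arguments. Unset Strict Implicit. Unset Printing Implicit Defensive.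
Import Order.TTheory GRing.Theory Num.Theory.
Local Open Scope ring_scope.

(* Vertices of W(k): the a_i (i in 'I_k) and the b_S (S a 2-subset of 'I_k). *)
Definition Wvert (k : nat) : finType :=
  ('I_k + {S : {set 'I_k} | #|S| == 2%N})%type.

Definition W_adj (k : nat) (u v : Wvert k) : bool :=
  match u, v with
  | inl i, inl j => i != j
  | inl i, inr A => i \in val A
  | inr A, inl i => i \in val A
  | inr A, inr B => [disjoint val A & val B]
  end.

Definition W_adjmx (k : nat) : 'M[algC]_#|Wvert k| :=
  \matrix_(i, j) (W_adj (enum_val i) (enum_val j))%:R.

(* The adjacency matrix A is real symmetric, so by the spectral theorem its
   characteristic polynomial splits over a list s of eigenvalues, and every
   eigenspace has dimension at most the multiplicity of its eigenvalue in s
   (hermitian_spectrum).  We exhibit five pairwise distinct eigenvalues with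
   explicit families of eigenvectors:
   - 1, with multiplicity >= C(k,2) - k: combinations of the b_S whose
     coefficients are killed by the vertex/pair incidence matrix;
   - the roots r_neg < 0 < r_pos of X^2 + (k-2) X - 1, each with multiplicity
     >= k - 1: zero-sum combinations of the stars e_(a_i) + g sum_(S 
i i) e_(b_S);
   - the roots 0 < s_lo < s_hi of X^2 - B X + P, where B = k - 1 + C(k-2,2)
     and P = (k-1)(C(k-2,2) - 2): vectors constant on the a_i and on the b_S.
   These lower bounds add up to k + C(k,2), the order of A, hence they are the
   exact multiplicities and there are no other eigenvalues
   (count_from_multiplicities); r_neg is the only nonpositive one. *)

From HB Require Import structures.
From mathcomp Require Import all_boot all_order all_algebra all_field.
From mathcomp Require Import zify ring.
Import Order.TTheory GRing.Theory Num.Theory.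
Set Implicit Arguments. Unset Strict Implicit. Unset Printing Implicit Defensive.

Section TwoSubsets.
Variable T : finType.

Lemma pair_inj (i : T) : injective (fun x : T => [set i; x]).
Proof.
move=> x y /setP Exy.
have := Exy y; rewrite !inE eqxx orbT => /orP [/eqP yi|/eqP -> //].
have := Exy x; rewrite !inE eqxx orbT yi => /esym /orP [/eqP -> //|/eqP //].
Qed.

Lemma card_pairs_through_in (i : T) (X : {set T}) : i \notin X ->
  #|[pred S : {set T} | (#|S| == 2) && (i \in S) && (S \subset i |: X)]| = #|X|.
Proof.
move=> iX; rewrite -(card_imset (mem X) (@pair_inj i)).
apply: eq_card => S; rewrite !inE; apply/idP/imsetP.
  move=> /andP [/andP [/cards2P [a [b [ab ->]]] iS] Ssub].
  have other x : x \in [set a; b] -> x != i -> x \in X.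
    by move=> xS xi; have := subsetP Ssub x xS; rewrite in_setU1 (negbTE xi).
  move: iS; rewrite !inE => /orP [/eqP ia|/eqP ib].
    exists b; last by rewrite ia.
    by apply: other; [rewrite !inE eqxx orbT | rewrite ia eq_sym].
  exists a; last by rewrite ib setUC.
  by apply: other; [rewrite !inE eqxx | rewrite ib].
move=> [x xX ->]; have ix : i != x by apply: contraNneq iX => ->.
rewrite cards2 ix !inE eqxx /=.
by apply/subsetP => y; rewrite !inE => /orP [->|/eqP ->]; rewrite ?xX ?orbT.
Qed.

Lemma card_pairs_through (i : T) :
  #|[pred S : {set T} | (#|S| == 2) && (i \in S)]| = #|T|.-1.
Proof.
rewrite -(cardsC1 i) -(@card_pairs_through_in i [set~ i]) ?setC11 //.
have -> : i |: [set~ i] = setT by apply/setP => y; rewrite !inE orbN.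
by apply: eq_card => S; rewrite !inE subsetT andbT.
Qed.

Lemma card_pairs_through2 (i j : T) : i != j ->
  #|[pred S : {set T} | (#|S| == 2) && (i \in S) && (j \in S)]| = 1.
Proof.
move=> ij; apply: (@eq_card1 _ [set i; j]) => S; rewrite !inE; apply/idP/eqP.
  move=> /andP [/andP [S2 iS] jS]; apply/eqP; rewrite eq_sym eqEcard.
  rewrite cards2 ij (eqP S2) leqnn andbT.
  by apply/subsetP => y; rewrite !inE => /orP [] /eqP ->.
by move=> ->; rewrite cards2 ij !inE !eqxx orbT.
Qed.

Lemma card_pairs_through_avoiding (i : T) (U : {set T}) : i \notin U ->
  #|[pred S : {set T} | (#|S| == 2) && (i \in S) && [disjoint S & U]]|
   = #|~: (i |: U)|.
Proof.
move=> iU; rewrite -(@card_pairs_through_in i) ?(in_setC, setU11) //.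
have -> : i |: ~: (i |: U) = ~: U.
  by apply/setP => y; rewrite !inE; case: (eqVneq y i) => [->|]; rewrite ?iU.
by apply: eq_card => S; rewrite !inE disjoints_subset.
Qed.

Lemma card_pairs_avoiding (U : {set T}) :
  #|[pred S : {set T} | (#|S| == 2) && [disjoint S & U]]| = 'C(#|~: U|, 2).
Proof.
rewrite -cards_draws; apply: eq_card => S.
by rewrite !inE disjoints_subset andbC.
Qed.

Lemma disjoint_pairs (S U : {set T}) : #|S| = 2%N -> #|U| = 2%N ->
  ([disjoint S & U] + #|S :&: U| = 1 + (S == U))%N.
Proof.
move=> S2 U2; have [<-|SU] := eqVneq S U.
  by rewrite setIid -setI_eq0 setIid -cards_eq0 S2.
have [dSU|mSU] := boolP [disjoint S & U]; first by rewrite (disjoint_setI0 dSU) cards0.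
have SU_gt0 : (0 < #|S :&: U|)%N.
  by rewrite card_gt0 setI_eq0.
have SU_lt2 : (#|S :&: U| < 2)%N.
  rewrite ltn_neqAle -{2}S2 subset_leq_card ?subsetIl // andbT.
  apply: contraNneq SU => SU2.
  have SUS : S :&: U = S by apply/eqP; rewrite eqEcard subsetIl SU2 S2.
  have SUU : S :&: U = U by apply/eqP; rewrite eqEcard subsetIr SU2 U2.
  by rewrite -SUU SUS.
by case: #|S :&: U| SU_gt0 SU_lt2 => [|[|]].
Qed.

Lemma card_two_subsets : #|{: {S : {set T} | #|S| == 2}}| = 'C(#|T|, 2).
Proof. by rewrite card_sig -card_draws; apply: eq_card => S; rewrite !inE. Qed.

End TwoSubsets.

Lemma count_image (T : eqType) (I : finType) (ev : I -> T) (P : pred T)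
    (s : seq T) : injective ev ->
  \sum_(i | P (ev i)) count_mem (ev i) s
    = count [pred x | P x & x \in codom ev] s.
Proof.
move=> ev_inj; elim: s => [|x s IH]; first by rewrite big1.
rewrite /= big_split /= IH; congr (_ + _)%N.
have [/codomP [j ->]|xev] := boolP (x \in codom ev); last first.
  rewrite andbF big1 // => i _; apply/eqP; rewrite eqb0.
  by apply: contra xev => /eqP ->; exact: codom_f.
rewrite andbT.
under eq_bigr do rewrite (inj_eq ev_inj).
have [Pj|nPj] := boolP (P (ev j)).
  rewrite (bigD1 j) //= eqxx big1 // => i /andP [_ ij].
  by rewrite eq_sym (negbTE ij).
by rewrite big1 // => i Pi; apply/eqP; rewrite eqb0; apply: contraNneq nPj => ->.
Qed.

(* If lower bounds m i for the multiplicities in s of pairwise distinct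
   values ev i already add up to the length of s, then they are the exact
   multiplicities and s contains nothing else; hence any count over s can be
   read off from m. *)
Lemma count_from_multiplicities (T : eqType) (I : finType) (ev : I -> T)
    (m : I -> nat) (s : seq T) :
  injective ev -> (forall i, m i <= count_mem (ev i) s)%N ->
  (\sum_i m i)%N = size s ->
  forall P : pred T, count P s = (\sum_(i | P (ev i)) m i)%N.
Proof.
move=> ev_inj m_le m_sum P.
have sum_counts := @count_image _ _ _ predT s ev_inj.
have count_le : (\sum_i count_mem (ev i) s <= size s)%N.
  by rewrite sum_counts count_size.
have /leqif_sum m_leqif : forall i, predT i ->
    (m i <= count_mem (ev i) s ?= iff (m i == count_mem (ev i) s))%N.
  by move=> i _; apply/leqif_eq.
have m_eq i : m i = count_mem (ev i) s.
  have /forall_inP all_eq : [forall (i | predT i), m i == count_mem (ev i) s].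
    by rewrite -m_leqif.2 eqn_leq m_leqif.1 m_sum count_le.
  exact/eqP/all_eq.
have s_in : all (mem (codom ev)) s.
  rewrite all_count eqn_leq count_size -m_sum (eq_bigr _ (fun i _ => m_eq i)).
  by rewrite /= sum_counts; apply/eq_leq/eq_count.
rewrite (eq_bigr _ (fun i _ => m_eq i)) count_image //.
by apply: eq_in_count => x /(allP s_in) /= ->; rewrite andbT.
Qed.

Local Open Scope ring_scope.

Section Similarity.
Variable n : nat.
Implicit Types (P D : 'M[algC]_n).

Lemma char_poly_conj P D : P \in unitmx ->
  char_poly (invmx P *m D *m P) = char_poly D.
Proof.
move=> Pu; rewrite /char_poly.
have -> : char_poly_mx (invmx P *m D *m P) =
    map_mx polyC (invmx P) *m char_poly_mx D *m map_mx polyC P.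
  rewrite /char_poly_mx mulmxBr mulmxBl -!map_mxM; congr (_ - _).
  by rewrite mul_mx_scalar -scalemxAl -map_mxM mulVmx // map_mx1 scalemx1.
rewrite !det_mulmx mulrC mulrA -det_mulmx -map_mxM mulmxV //.
by rewrite map_mx1 det1 mul1r.
Qed.

Lemma char_poly_diag (d : 'rV[algC]_n) :
  char_poly (diag_mx d) = \prod_(x <- [seq d 0 i | i <- enum 'I_n]) ('X - x%:P).
Proof.
rewrite char_poly_trig ?diag_mx_is_trig // big_map big_enum /=.
by apply: eq_bigr => i _; rewrite mxE eqxx mulr1n.
Qed.

(* The a-eigenspace of a matrix similar to diag d has dimension at most the
   number of diagonal entries equal to a: in the eigenbasis, its vectors are
   supported on those coordinates. *)
Lemma rank_eigenspace_conj_diag P (d : 'rV[algC]_n) a : P \in unitmx ->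
  (\rank (eigenspace (invmx P *m diag_mx d *m P) a)
     <= #|[pred i : 'I_n | d ord0 i == a]|)%N.
Proof.
move=> Pu; set A := invmx P *m diag_mx d *m P; set E := eigenspace A a.
have -> : \rank E = \rank (E *m invmx P).
  by rewrite mxrankMfree // row_free_unit unitmx_inv.
set S := [pred i : 'I_n | d 0 i == a].
pose Sel : 'M[algC]_(#|S|, n) := \matrix_(j, i) (i == enum_val j)%:R.
apply: leq_trans (rank_leq_row Sel); apply: mxrankS.
apply/row_subP => i; set w := row i (E *m invmx P).
have w_supp j : d 0 j != a -> w 0 j = 0.
  have : row i E *m A = a *: row i E by apply/eigenspaceP; exact: row_sub.
  rewrite /w row_mul => /(congr1 (mulmx^~ (invmx P))).
  rewrite /A !mulmxA mulmxK // -scalemxAl => /rowP /(_ j).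
  rewrite mul_mx_diag !mxE => /eqP; rewrite mulrC -subr_eq0 -mulrBl mulf_eq0.
  by rewrite subr_eq0 => /orP [/eqP ->|/eqP //]; rewrite eqxx.
apply/submxP; exists (\row_j w 0 (enum_val j)); apply/rowP => j.
rewrite [RHS]mxE; under eq_bigr => x _ do rewrite [Sel _ _]mxE [(\row__ _) _ _]mxE.
rewrite -(big_enum_val (A := S) (fun x => w 0 x * (j == x)%:R)) /=.
have [jS|jNS] := boolP (j \in S).
  rewrite (bigD1 j) //= eqxx mulr1 big1 ?addr0 // => x /andP [_ xj].
  by rewrite eq_sym (negbTE xj) mulr0.
rewrite big1 ?w_supp // => x xS.
by rewrite (_ : (j == x) = false) ?mulr0 //; apply: contraNF jNS => /eqP ->.
Qed.

End Similarity.

Lemma hermitian_spectrum n (A : 'M[algC]_n) : A \is hermsymmx ->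
  exists s : seq algC, [/\ size s = n,
    char_poly A = \prod_(x <- s) ('X - x%:P) &
    forall a, (\rank (eigenspace A a) <= count_mem a s)%N].
Proof.
move=> /hermitian_normalmx /orthomx_spectralP A_eq.
have P_unit := spectral_unit A.
exists [seq spectral_diag A 0 i | i <- enum 'I_n]; split.
- by rewrite size_map size_enum_ord.
- by rewrite [in LHS]A_eq char_poly_conj // char_poly_diag.
- move=> a; rewrite [in X in eigenspace X]A_eq count_map.
  apply: leq_trans (rank_eigenspace_conj_diag _ _ P_unit) _.
  by rewrite -sum1_count big_enum_cond /= -sum1_card.
Qed.

(* If E is row-free and E *m A = l *: E + N *m Z, then every combination of
   the rows of E with coefficients killed by N is an l-eigenvector, so the
   l-eigenspace has dimension at least p - q. *)
Lemma rank_eigenspace_from_relation (F : fieldType) p q n (A : 'M[F]_n)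
    (E : 'M_(p, n)) (N : 'M_(p, q)) (Z : 'M_(q, n)) (l : F) :
  row_free E -> E *m A = l *: E + N *m Z ->
  (p - q <= \rank (eigenspace A l))%N.
Proof.
move=> E_free EA.
have ker_sub : (kermx N *m E <= eigenspace A l)%MS.
  apply/eigenspaceP.
  by rewrite -mulmxA EA mulmxDr mulmxA mulmx_ker mul0mx addr0 scalemxAr.
apply: leq_trans (mxrankS ker_sub).
by rewrite mxrankMfree // mxrank_ker leq_sub2l // rank_leq_col.
Qed.

Section QuadraticRoots.
Variables b c : algC.

Definition qroot_lo : algC := (b - sqrtC (b ^+ 2 - 4 * c)) / 2.
Definition qroot_hi : algC := (b + sqrtC (b ^+ 2 - 4 * c)) / 2.

Lemma qroot_add : qroot_lo + qroot_hi = b.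
Proof. by rewrite /qroot_lo /qroot_hi; field. Qed.

Lemma qroot_mul : qroot_lo * qroot_hi = c.
Proof.
rewrite /qroot_lo /qroot_hi.
have -> : forall w : algC, (b - w) / 2 * ((b + w) / 2) = (b ^+ 2 - w ^+ 2) / 4.
  by move=> w; field.
by rewrite sqrtCK; field.
Qed.

Lemma qroot_lo_root : qroot_lo ^+ 2 - b * qroot_lo + c = 0.
Proof. by rewrite -{1}qroot_add -qroot_mul; ring. Qed.

Lemma qroot_hi_root : qroot_hi ^+ 2 - b * qroot_hi + c = 0.
Proof. by rewrite -{1}qroot_add -qroot_mul; ring. Qed.

Lemma sqrt_disc_gt (x : algC) : 0 <= x -> x ^+ 2 < b ^+ 2 - 4 * c ->
  x < sqrtC (b ^+ 2 - 4 * c).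
Proof.
move=> x_ge0 x_lt; have d_ge0 : 0 <= b ^+ 2 - 4 * c.
  by apply: le_trans (ltW x_lt); rewrite exprn_ge0.
by rewrite -(@ltr_pXn2r _ 2) ?sqrtCK // nnegrE ?sqrtC_ge0.
Qed.

Lemma qroot_signs_opposite : b \is Num.real -> c < 0 ->
  qroot_lo < 0 < qroot_hi.
Proof.
move=> b_real c_lt0.
have norm_lt : `|b| < sqrtC (b ^+ 2 - 4 * c).
  apply: sqrt_disc_gt => //.
  by rewrite real_normK // ltrDl oppr_gt0 pmulr_rlt0 ?ltr0n.
rewrite /qroot_lo /qroot_hi !pmulr_llt0 ?pmulr_lgt0 ?invr_gt0 ?ltr0n //.
rewrite subr_lt0 -ltrBlDl sub0r.
apply/andP; split; apply: le_lt_trans norm_lt.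
  exact: real_ler_norm.
by rewrite -normrN real_ler_norm ?rpredN.
Qed.

Lemma qroot_pos_distinct : 0 < b -> 0 < c -> 0 < b ^+ 2 - 4 * c ->
  0 < qroot_lo < qroot_hi.
Proof.
move=> b_gt0 c_gt0 d_gt0.
have sqrt_gt0 : 0 < sqrtC (b ^+ 2 - 4 * c) by rewrite sqrtC_gt0.
have sqrt_lt : sqrtC (b ^+ 2 - 4 * c) < b.
  rewrite -(@ltr_pXn2r _ 2) ?sqrtCK ?nnegrE ?sqrtC_ge0 ?ltW //.
  by rewrite ltrBlDr ltrDl pmulr_rgt0 ?ltr0n.
rewrite /qroot_lo /qroot_hi pmulr_lgt0 ?invr_gt0 ?ltr0n // subr_gt0 sqrt_lt /=.
by rewrite ltr_pM2r ?invr_gt0 ?ltr0n // ltrD2l gtrN.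
Qed.

End QuadraticRoots.

Lemma sum_delta (I : finType) (j : I) (F : I -> algC) :
  \sum_(x : I) (x == j)%:R * F x = F j.
Proof.
rewrite (bigD1 j) //= eqxx mul1r big1 ?addr0 // => x /negbTE ->.
by rewrite mul0r.
Qed.

Lemma sum_indicator (I : finType) (P : pred I) :
  \sum_(x : I) (P x)%:R = #|P|%:R :> algC.
Proof.
by rewrite -natr_sum -sum1_card [in RHS]big_mkcond.
Qed.

Section WGraph.
Variable k : nat.
Local Notation V := (Wvert k).
Local Notation A := (W_adjmx k).

Lemma W_adj_sym (u v : V) : W_adj u v = W_adj v u.
Proof.
by case: u => [i|S]; case: v => [j|U]; rewrite /W_adj 1?eq_sym 1?disjoint_sym.
Qed.

Lemma W_adjmx_herm : A \is hermsymmx.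
Proof.
rewrite qualifE expr0 scale1r; apply/eqP/matrixP => i j.
by rewrite !mxE conjC_nat W_adj_sym.
Qed.

Lemma card_Wvert : #|V| = (k + 'C(k, 2))%N.
Proof. by rewrite card_sum card_two_subsets !card_ord. Qed.

Definition vertex_rows p (g : 'I_p -> V -> algC) : 'M[algC]_(p, #|V|) :=
  \matrix_(r, j) g r (enum_val j).

Lemma sum_vertices (F : V -> algC) :
  \sum_(j < #|V|) F (enum_val j) = \sum_(x : V) F x.
Proof. by rewrite -(big_enum_val (A := V)). Qed.

Lemma vertex_rows_mulA p (g : 'I_p -> V -> algC) :
  vertex_rows g *m A = vertex_rows (fun r y => \sum_(x : V) g r x * (W_adj x y)%:R).
Proof.
apply/matrixP => r j; rewrite !mxE -sum_vertices.
by apply: eq_bigr => i _; rewrite !mxE.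
Qed.

Lemma sum_vertices_split (F : V -> algC) :
  \sum_(x : V) F x = \sum_(i : 'I_k) F (inl i) + \sum_S F (inr S).
Proof. exact: big_sumType. Qed.

End WGraph.

Section WEigenvectors.
Variable t : nat.
Local Notation k := t.+3.
Local Notation V := (Wvert k).
Local Notation A := (W_adjmx k).
Local Notation Pairs := ({S : {set 'I_k} | #|S| == 2%N} : finType).

Lemma card_pairs_pred (P : pred {set 'I_k}) :
  #|[pred S : Pairs | P (val S)]| = #|[pred S : {set 'I_k} | (#|S| == 2) && P S]|.
Proof.
rewrite -(card_imset _ val_inj); apply: eq_card => X; rewrite !inE.
apply/imsetP/idP => [[S PS ->]|/andP [X2 PX]]; first by rewrite (valP S).
by exists (exist _ X X2).
Qed.

Lemma sum_pairs_indicator (P : pred {set 'I_k}) :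
  \sum_(S : Pairs) (P (val S))%:R =
    #|[pred S : {set 'I_k} | (#|S| == 2) && P S]|%:R :> algC.
Proof. by rewrite sum_indicator -card_pairs_pred. Qed.

Lemma card_pair_compl (U : {set 'I_k}) : #|U| = 2%N -> #|~: U| = t.+1.
Proof. by move=> U2; have := cardsC U; rewrite U2 card_ord; lia. Qed.

(* Eigenvalue 1.  The rows e_{b_S} satisfy e_{b_S} A = e_{b_S} + sum over
   i \in S of z_i, for fixed rows z_i; so combinations of them orthogonal
   to the k columns of the incidence matrix are 1-eigenvectors. *)
Definition pair_of (s : 'I_#|Pairs|) : Pairs := enum_val s.
Definition pair_rows := vertex_rows (fun s (y : V) => (y == inr (pair_of s))%:R).
Definition pair_incidence : 'M[algC]_(#|Pairs|, k) :=
  \matrix_(s, i) (i \in val (pair_of s))%:R.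
Definition pair_defect := vertex_rows (fun (i : 'I_k) (y : V) =>
  match y with inl j => (i == j)%:R | inr U => 2^-1 - (i \in val U)%:R end).

(* For b_U, the neighbourhood sum of e_(b_S) is [S, U disjoint], which equals
   [S = U] + 1 - #|S :&: U| = [S = U] + sum over i in S of (1/2 - [i \in U]). *)
Lemma pair_rows_mulA : pair_rows *m A = 1 *: pair_rows + pair_incidence *m pair_defect.
Proof.
rewrite scale1r /pair_rows vertex_rows_mulA; apply/matrixP => s j.
rewrite !mxE sum_delta; under [X in _ = _ + X]eq_bigr do rewrite !mxE.
move: (enum_val j) (pair_of s) => y S; case: y => [j'|U] /=.
  by rewrite add0r; under eq_bigr do rewrite mulrC; rewrite sum_delta.
under eq_bigr do rewrite mulrBr -natrM mulnb.
rewrite sumrB -mulr_suml sum_indicator sum_indicator.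
have disjE := congr1 (fun n => n%:R : algC)
  (disjoint_pairs (eqP (valP S)) (eqP (valP U))).
rewrite /= !natrD in disjE.
rewrite (_ : #|[pred i | (i \in val S) && (i \in val U)]| = #|val S :&: val U|);
  last by apply: eq_card => i; rewrite !inE.
rewrite (_ : #|[pred i | i \in val S]| = 2%N); last exact: (eqP (valP S)).
rewrite (_ : (inr U == inr S :> V) = (val S == val U)); last by rewrite eq_sym.
rewrite -(addrK #|val S :&: val U|%:R [disjoint _ & _]%:R) disjE.
by rewrite divff ?pnatr_eq0 //; ring.
Qed.

Lemma pair_rows_free : row_free pair_rows.
Proof.
apply/row_freeP; exists (\matrix_(j, s) (enum_val j == inr (pair_of s))%:R).
apply/matrixP => s s'; rewrite !mxE; under eq_bigr do rewrite !mxE.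
rewrite (sum_vertices (fun x => (x == inr (pair_of s))%:R * (x == inr (pair_of s'))%:R)).
rewrite sum_delta (_ : (inr _ == inr _ :> V) = (pair_of s == pair_of s')) //.
by rewrite (inj_eq enum_val_inj).
Qed.

Lemma rank_eigenspace_one : ('C(k, 2) - k <= \rank (eigenspace A 1))%N.
Proof.
have := rank_eigenspace_from_relation pair_rows_free pair_rows_mulA.
by rewrite card_two_subsets card_ord.
Qed.

(* Eigenvalues r with r^2 + (k - 2) r = 1.  The "star" row of i is
   e_{a_i} + g * sum_{S \ni i} e_{b_S}; for suitable g, A moves it to
   r times itself plus a row independent of i, so combinations of stars
   with zero coefficient sum are r-eigenvectors. *)
Definition star_row (g : algC) (i : 'I_k) (y : V) : algC :=
  match y with inl j => (i == j)%:R | inr U => g * (i \in val U)%:R end.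
Definition star_rows g := vertex_rows (star_row g).
Definition ones_col : 'M[algC]_(k, 1) := const_mx 1.
Definition star_defect (g : algC) := vertex_rows (fun (_ : 'I_1) (y : V) =>
  match y with inl _ => 1 + g | inr _ => g * t%:R end).

Lemma star_row_at_a g i j :
  \sum_(x : V) star_row g i x * (W_adj x (inl j))%:R
    = (i != j)%:R + g * (if i == j then t.+2 else 1%N)%:R.
Proof.
rewrite sum_vertices_split /=; under eq_bigr do rewrite eq_sym.
rewrite sum_delta; under eq_bigr do rewrite -mulrA -natrM mulnb.
rewrite -mulr_sumr (sum_pairs_indicator (fun S => (i \in S) && (j \in S))) eq_sym.
congr (_ + g * _%:R).
have [<-|ij] := eqVneq i j.
  transitivity #|[pred S : {set 'I_k} | (#|S| == 2) && (i \in S)]|.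
    by apply: eq_card => S; rewrite !inE andbb.
  by rewrite card_pairs_through card_ord.
by rewrite -[RHS](card_pairs_through2 ij); apply: eq_card => S; rewrite !inE andbA.
Qed.

Lemma star_row_at_b g i (U : Pairs) :
  \sum_(x : V) star_row g i x * (W_adj x (inr U))%:R
    = (i \in val U)%:R + g * (if i \in val U then 0%N else t)%:R.
Proof.
rewrite sum_vertices_split /=; under eq_bigr do rewrite eq_sym.
rewrite sum_delta; under eq_bigr do rewrite -mulrA -natrM mulnb.
rewrite -mulr_sumr (sum_pairs_indicator (fun S => (i \in S) && [disjoint S & val U])).
congr (_ + g * _%:R).
have [iU|iNU] := boolP (i \in val U).
  apply: eq_card0 => S; rewrite !inE; apply/negP => /and3P [_ iS].
  by rewrite disjoints_subset => /subsetP /(_ i iS); rewrite !inE iU.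
transitivity #|[pred S : {set 'I_k} | (#|S| == 2) && (i \in S) && [disjoint S & val U]]|.
  by apply: eq_card => S; rewrite !inE andbA.
rewrite card_pairs_through_avoiding //.
have := cardsC (i |: val U); rewrite cardsU1 iNU (eqP (valP U)) card_ord.
by move=> /eqP; rewrite -[t.+3]/(3 + t)%N eqn_add2l => /eqP.
Qed.

(* The two conditions on g are the eigen-equations at a_i and at the b_S
   containing i. *)
Lemma star_rows_mulA (l g : algC) : g * (t.+1)%:R = l + 1 -> g * (l + t%:R) = 1 ->
  star_rows g *m A = l *: star_rows g + ones_col *m star_defect g.
Proof.
move=> g_a g_b; rewrite /star_rows vertex_rows_mulA; apply/matrixP => i j.
rewrite !mxE big_ord1 !mxE; case: (enum_val j) => [j'|U] /=.
  rewrite star_row_at_a; case: (i == j') => /=; last by ring.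
  by rewrite -natr1 mulrDr g_a; ring.
rewrite star_row_at_b; case: (i \in val U) => /=; last by ring.
by rewrite mulr0 addr0 mulr1 -{1}g_b; ring.
Qed.

(* The star of i restricted to the a-vertices is e_(a_i); so the stars are
   independent. *)
Lemma star_rows_free g : row_free (star_rows g).
Proof.
apply/row_freeP; exists (\matrix_(j, i) (enum_val j == inl i)%:R).
apply/matrixP => i i'; rewrite !mxE; under eq_bigr do rewrite !mxE.
rewrite (sum_vertices (fun x => star_row g i x * (x == inl i')%:R)).
by under eq_bigr do rewrite mulrC; rewrite sum_delta.
Qed.

(* Each root of X^2 + (k - 2) X - 1 has multiplicity at least k - 1, taking
   g = (l + 1) / (k - 2). *)
Lemma rank_eigenspace_star (l : algC) : l ^+ 2 + (t.+1)%:R * l = 1 ->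
  (t.+2 <= \rank (eigenspace A l))%N.
Proof.
move=> l_root; pose g := (l + 1) / (t.+1)%:R.
have a_neq0 : (t.+1)%:R != 0 :> algC by rewrite pnatr_eq0.
have g_a : g * (t.+1)%:R = l + 1 by rewrite divfK.
have g_b : g * (l + t%:R) = 1.
  apply: (mulIf a_neq0); rewrite mul1r mulrAC g_a.
  have -> : (l + 1) * (l + t%:R) = l ^+ 2 + (t.+1)%:R * l + t%:R.
    by rewrite -natr1; ring.
  by rewrite l_root nat1r.
have := rank_eigenspace_from_relation (star_rows_free g) (star_rows_mulA g_a g_b).
by rewrite subn1.
Qed.

(* Eigenvalues s with s^2 - (k - 1 + c) s + (k - 1)(c - 2) = 0, where
   c = 'C(k - 2, 2): the vector equal to 1 on every a_i and to b on every
   b_S is an eigenvector for a suitable b. *)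
Definition level_vector (b : algC) := vertex_rows (fun (_ : 'I_1) (y : V) =>
  match y with inl _ => 1 | inr _ => b end).

(* The two conditions are the eigen-equations at the a_i and at the b_S. *)
Lemma level_vector_mulA (s b : algC) : (1 + b) * (t.+2)%:R = s ->
  2 + b * ('C(t.+1, 2))%:R = s * b -> level_vector b *m A = s *: level_vector b.
Proof.
move=> s_a s_b; rewrite /level_vector vertex_rows_mulA; apply/matrixP => i j.
rewrite !mxE; case: (enum_val j) => [j'|U] /=; rewrite sum_vertices_split /=.
  under eq_bigr do rewrite mul1r.
  rewrite -mulr_sumr sum_indicator (sum_pairs_indicator (fun S => j' \in S)) mulr1.
  rewrite (_ : #|[pred i : 'I_k | i != j']| = t.+2); last by rewrite cardC1 card_ord.
  by rewrite card_pairs_through card_ord -s_a /=; ring.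
under eq_bigr do rewrite mul1r.
rewrite -mulr_sumr sum_indicator (sum_pairs_indicator (fun S => [disjoint S & val U])).
by rewrite card_pairs_avoiding card_pair_compl ?(eqP (valP U)) // -s_b.
Qed.

(* Each root of X^2 - (k - 1 + c) X + (k - 1)(c - 2) is an eigenvalue,
   taking b = s / (k - 1) - 1. *)
Lemma rank_eigenspace_level (s : algC) (c := 'C(t.+1, 2)) :
  s ^+ 2 - ((t.+2)%:R + c%:R) * s + (t.+2)%:R * (c%:R - 2) = 0 ->
  (1 <= \rank (eigenspace A s))%N.
Proof.
move=> s_root; set u := (t.+2)%:R : algC.
have u_neq0 : u != 0 by rewrite pnatr_eq0.
have [b s_a] : exists b, (1 + b) * u = s.
  by exists (s / u - 1); rewrite addrC subrK divfK.
have s_b : 2 + b * c%:R = s * b.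
  apply: (mulIf u_neq0); apply/eqP; rewrite -subr_eq0 -oppr_eq0 -s_root -s_a.
  by apply/eqP; ring.
have /eigenspaceP ev_sub := level_vector_mulA s_a s_b.
apply: leq_trans (mxrankS ev_sub); rewrite lt0n mxrank_eq0.
apply/eqP => /matrixP /(_ 0 (enum_rank (inl ord0 : V))).
by rewrite !mxE enum_rankK => /eqP; rewrite oner_eq0.
Qed.

End WEigenvectors.

(* Elementary inequalities on the coefficients of X^2 - B X + P, where
   B = (t + 2) + c and P = (t + 2)(c - 2), for c >= 3: the discriminant is
   positive (AM-GM), B <= (t + 1) P, and 1 is not a root. *)
Lemma level_disc_gt0 (u c : nat) : (0 < u)%N -> (3 <= c)%N ->
  (4 * (u * (c - 2)) < (u + c) ^ 2)%N.
Proof.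
move=> u_gt0 c_ge3; apply: leq_trans (nat_AGM2 _ _).
by rewrite ltn_pmul2l // ltn_pmul2l // ltn_subrL; case: c c_ge3.
Qed.

Lemma level_coef_le (t c : nat) : (2 <= t)%N -> (3 <= c)%N ->
  (t.+2 + c <= t.+1 * (t.+2 * (c - 2)))%N.
Proof.
move=> t_ge2; case: c => [|[|d]] // d_ge1; rewrite !subSS subn0.
by rewrite [(t.+1 * _)%N]mulnC; nia.
Qed.

Lemma level_one_not_root (t c : nat) : (2 <= t)%N -> (3 <= c)%N ->
  (1 + t.+2 * (c - 2) != t.+2 + c)%N.
Proof.
move=> t_ge2; case: c => [|[|[|d]]] // _; rewrite !subSS subn0.
by apply/eqP; case: d => [|d]; nia.
Qed.

Section WSpectrum.
Variable t : nat.
Hypothesis t_ge2 : (2 <= t)%N.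
Local Notation k := t.+3.
Local Notation A := (W_adjmx k).

(* The numerical data: c = 'C(k - 2, 2) two-subsets avoid a given one, and
   the level eigenvalues are the roots of X^2 - B X + P. *)
Let c := 'C(t.+1, 2).
Let B := (t.+2 + c)%N.
Let P := (t.+2 * (c - 2))%N.

Lemma c_ge3 : (3 <= c)%N.
Proof. exact: (leq_bin2l 2 (t_ge2 : (3 <= t.+1)%N)). Qed.

Lemma B_gt0 : (0 < B)%N. Proof. by rewrite addn_gt0. Qed.
Lemma P_gt0 : (0 < P)%N. Proof. by rewrite muln_gt0 subn_gt0 c_ge3. Qed.

Definition r_neg := qroot_lo (- (t.+1)%:R) (-1).
Definition r_pos := qroot_hi (- (t.+1)%:R) (-1).
Definition s_lo := qroot_lo B%:R P%:R.
Definition s_hi := qroot_hi B%:R P%:R.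

(* Signs: r_neg < 0 < r_pos since their product is -1, and
   0 < s_lo < s_hi since P > 0, B > 0 and B^2 > 4 P. *)
Lemma r_signs : r_neg < 0 < r_pos.
Proof. by apply: qroot_signs_opposite; rewrite ?rpredN ?realn ?ltrN10. Qed.

Lemma s_signs : 0 < s_lo < s_hi.
Proof.
apply: qroot_pos_distinct; rewrite ?ltr0n ?B_gt0 ?P_gt0 //.
by rewrite -natrX -natrM subr_gt0 ltr_nat level_disc_gt0 ?c_ge3.
Qed.

Lemma star_root (x : algC) :
  x ^+ 2 - (- (t.+1)%:R) * x + -1 = 0 -> x ^+ 2 + (t.+1)%:R * x = 1.
Proof. by move=> x_root; apply/eqP; rewrite -subr_eq0 -x_root; apply/eqP; ring. Qed.

Lemma level_root (x : algC) : x ^+ 2 - B%:R * x + P%:R = 0 ->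
  x ^+ 2 - ((t.+2)%:R + c%:R) * x + (t.+2)%:R * (c%:R - 2) = 0.
Proof. by rewrite /B /P natrD natrM natrB // ltnW ?c_ge3. Qed.

(* The positive root r_pos is below 1 / (k - 2), while s_lo is above
   P / B >= 1 / (k - 2); in particular r_pos < 1 and r_pos < s_lo. *)
Lemma r_pos_scaled : r_pos * (t.+1)%:R < 1.
Proof.
have root : r_pos ^+ 2 + (t.+1)%:R * r_pos = 1 by apply/star_root/qroot_hi_root.
rewrite mulrC -{2}root ltrDr exprn_gt0 //.
by case/andP: r_signs.
Qed.

Lemma r_pos_lt1 : r_pos < 1.
Proof.
apply: le_lt_trans r_pos_scaled; rewrite ler_peMr ?ler1n //.
by case/andP: r_signs => _ /ltW.
Qed.

Lemma r_pos_lt_s_lo : r_pos < s_lo.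
Proof.
have [s_lo_gt0 _] := andP s_signs.
have a_gt0 : 0 < (t.+1)%:R :> algC by rewrite ltr0n.
have B_pos : 0 < B%:R :> algC by rewrite ltr0n B_gt0.
have s_hi_lt : s_hi < B%:R by rewrite -(qroot_add B%:R P%:R) ltrDr.
have P_lt : P%:R < s_lo * B%:R by rewrite -(qroot_mul B%:R P%:R) ltr_pM2l.
rewrite -(ltr_pM2r (mulr_gt0 a_gt0 B_pos)).
apply: (@lt_le_trans _ _ B%:R).
  by rewrite mulrA -[X in _ < X]mul1r ltr_pM2r // r_pos_scaled.
apply: (@le_trans _ _ ((t.+1)%:R * P%:R)).
  by rewrite -natrM ler_nat level_coef_le ?c_ge3.
by rewrite mulrCA ler_pM2l // ltW.
Qed.

Lemma level_root_neq1 (x : algC) : x ^+ 2 - B%:R * x + P%:R = 0 -> x != 1.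
Proof.
move=> x_root; apply: contraTneq (level_one_not_root t_ge2 c_ge3) => x1.
move: x_root; rewrite x1 expr1n mulr1 negbK -(eqr_nat algC) natrD => one_root.
by rewrite -subr_eq0 -one_root addrAC.
Qed.

(* The eigenvalues are pairwise distinct: r_neg < r_pos < s_lo < s_hi, and
   1 differs from each of them. *)
Lemma eigenvalues_uniq : uniq [:: 1; r_neg; r_pos; s_lo; s_hi].
Proof.
have [r_neg_lt0 r_pos_gt0] := andP r_signs.
have [s_lo_gt0 s_lo_lt] := andP s_signs.
rewrite cons_uniq (sorted_uniq lt_trans ltxx); last first.
  by rewrite /= r_pos_lt_s_lo s_lo_lt (lt_trans r_neg_lt0 r_pos_gt0).
rewrite !inE andbT !negb_or !(eq_sym 1).
rewrite (lt_eqF (lt_trans r_neg_lt0 ltr01)) (lt_eqF r_pos_lt1).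
by rewrite !level_root_neq1 ?qroot_lo_root ?qroot_hi_root.
Qed.

Definition W_eigenvalue (i : 'I_5) : algC := [:: 1; r_neg; r_pos; s_lo; s_hi]`_i.
Definition W_multiplicity (i : 'I_5) : nat :=
  nth 0%N [:: 'C(k, 2) - k; k.-1; k.-1; 1; 1]%N i.

Lemma W_eigenvalue_inj : injective W_eigenvalue.
Proof.
move=> i j /eqP; rewrite /W_eigenvalue nth_uniq ?eigenvalues_uniq //.
by move=> /eqP; apply: val_inj.
Qed.

Lemma W_multiplicity_le i :
  (W_multiplicity i <= \rank (eigenspace A (W_eigenvalue i)))%N.
Proof.
case: i => [[|[|[|[|[|i]]]]] i_lt] /=.
- exact: rank_eigenspace_one.
- exact/rank_eigenspace_star/star_root/qroot_lo_root.
- exact/rank_eigenspace_star/star_root/qroot_hi_root.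
- exact/rank_eigenspace_level/level_root/qroot_lo_root.
- exact/rank_eigenspace_level/level_root/qroot_hi_root.
- by [].
Qed.

(* The lower bounds add up to the number of vertices, using k <= C(k, 2). *)
Lemma W_multiplicity_sum : (\sum_i W_multiplicity i)%N = #|Wvert k|.
Proof.
have k_le : (k <= 'C(k, 2))%N.
  by rewrite binS bin1 addnC -[t.+3]addn1 leq_add2l bin_gt0.
rewrite !big_ord_recl big_ord0 card_Wvert /W_multiplicity /=.
by move: k_le; lia.
Qed.

Lemma W_nonpositive_multiplicity :
  (\sum_(i | (W_eigenvalue i <= 0)%R) W_multiplicity i)%N = k.-1.
Proof.
have [r_neg_lt0 r_pos_gt0] := andP r_signs.
have [s_lo_gt0 s_lo_lt] := andP s_signs.
rewrite big_mkcond !big_ord_recl big_ord0 /W_eigenvalue /=.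
rewrite ler10 (ltW r_neg_lt0) (lt_geF r_pos_gt0) (lt_geF s_lo_gt0).
by rewrite (lt_geF (lt_trans s_lo_gt0 s_lo_lt)) !add0n addn0.
Qed.

End WSpectrum.

Theorem mainTheorem11 (k : nat) (hk : (5 <= k)%N) :
  exists s : seq algC,
    char_poly (W_adjmx k) = \prod_(x <- s) ('X - x%:P) /\
    count (fun x : algC => x <= 0) s = k.-1.
Proof.
case: k hk => [|[|[|t]]] // t_ge2.
have [s [size_s char_s rank_le]] := hermitian_spectrum (W_adjmx_herm t.+3).
exists s; split => //.
have mult_le i : (W_multiplicity t i <= count_mem (W_eigenvalue t i) s)%N.
  exact: leq_trans (W_multiplicity_le t_ge2 i) (rank_le _).
rewrite (count_from_multiplicities (W_eigenvalue_inj t_ge2) mult_le).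
  exact: W_nonpositive_multiplicity t_ge2.
by rewrite size_s W_multiplicity_sum.
Qed.
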